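(* Let $\xi_1,\xi_2,\ldots$ be i.i.d.\ nonnegative real random variables with $\overline F(x):=\P(\xi_1\geq x)=x^{-1}\ell(x)$ for $x\to\infty$, where $\ell$ is slowly varying. Let $G(x):=\int_0^x\overline F(t)\,dt$ and $S_k:=\sum_{i=1}^k\xi_i$. Let $(x_n)_{n\geq1}$ be a positive sequence with $\liminf_{n\to\infty}\frac{x_n}{nG(x_n)}>0$ and let $(a_n)_{n\geq1}$ be a positive sequence with $\lim_{n\to\infty}a_n\in(0,\infty)$. Let $(y_n)_{n\geq1}$ be a positive sequence such that, as $n\to\infty$: $y_n\to\infty$, $y_n=o(x_n)$, $ny_n^2\overline F(x_n)\to0$, $\overline F(x_n/y_n)\sim y_n\overline F(x_n)$, and $G(x_n/y_n)\sim G(x_n)$. Let $C>0$ be a constant such that $$\operatorname{Var}\left(\xi_1\mathbf 1_{\{\xi_1<x_n/y_n\}}\right)\leq C\,\frac{x_n^2\overline F(x_n)}{y_n}\quad\text{for all } n\geq1.$$ Then for all $n$ large enough, $$\P(S_k-kG(x_n)\leq -a_nx_n)\leq \frac{4Ck\overline F(x_n)}{a_n^2y_n}\quad\text{for all }1\leq k\leq n.$$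
   Context: A function $\ell$ is slowly varying if $\ell(\lambda x)/\ell(x)\to1$ as $x\to\infty$ for every $\lambda>0$. For sequences, $u_n\sim v_n$ means $u_n/v_n\to1$ as $n\to\infty$. *)

From HB Require Import structures.
From mathcomp Require Import all_boot all_order all_algebra.
From mathcomp Require Import all_classical all_reals all_analysis.
Set Implicit Arguments. Unset Strict Implicit. Unset Printing Implicit Defensive.
Import Order.TTheory GRing.Theory Num.Theory.
Import numFieldNormedType.Exports.
Local Open Scope classical_set_scope.
Local Open Scope ring_scope.

Definition slowly_varying (R : realType) (l : R -> R) : Prop :=
  forall lam : R, 0 < lam -> (l (lam * x) / l x) @[x --> +oo] --> (1 : R).

Definition seq_equiv (R : realType) (u v : R ^nat) : Prop :=
  (fun n => u n / v n) @ \oo --> (1 : R).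

Definition mutually_independent d (T : measurableType d) (R : realType)
  (P : probability T R) (X : nat -> T -> R) : Prop :=
  forall (I : seq nat) (B : nat -> set R), uniq I ->
    (forall i, i \in I -> measurable (B i)) ->
    P (\big[setI/setT]_(i <- I) (X i @^-1` B i)) =
    (\prod_(i <- I) P (X i @^-1` B i))%E.

Definition identically_distributed d (T : measurableType d) (R : realType)
  (P : probability T R) (X : nat -> T -> R) : Prop :=
  forall i (B : set R), measurable B -> P (X i @^-1` B) = P (X 0%N @^-1` B).

Definition tailF d (T : measurableType d) (R : realType)
  (P : probability T R) (X : T -> R) (x : R) : R :=
  fine (P [set w | x <= X w]).

Definition intTail d (T : measurableType d) (R : realType)
  (P : probability T R) (X : T -> R) (x : R) : R :=
  Rintegral (@lebesgue_measure R) `[0, x] (tailF P X).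

From HB Require Import structures.
From mathcomp Require Import all_boot all_order all_algebra.
From mathcomp Require Import all_classical all_reals all_analysis.
From mathcomp Require Import measurable_realfun ring lra.
Import Order.TTheory GRing.Theory Num.Theory.
Import numFieldNormedType.Exports.
Local Open Scope classical_set_scope.
Local Open Scope ring_scope.

(** Truncate at u_n = x_n / y_n: the variables eta_i = xi_i 1{xi_i < u_n} satisfy
    eta_i <= xi_i, so the event is contained in
    {sum_(i<k) eta_i - k G(x_n) <= - a_n x_n}.  By the layer-cake formula
    E eta >= G(u_n) - u_n F(u_n), and the hypotheses on (x_n) and (y_n) make
    n (G(x_n) - G(u_n) + u_n F(u_n)) = o(x_n), so the centring error
    k (G(x_n) - E eta) is at most a_n x_n / 2 for every k <= n.  The eta_i are
    bounded and i.i.d., hence uncorrelated, and Chebyshev's inequality with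
    Var (sum_(i<k) eta_i) = k Var eta <= k C x_n^2 F(x_n) / y_n gives the bound.
    Independence is used only through E[XY] = E[X] E[Y] for bounded nonnegative
    X, Y whose upper level sets are independent, which follows by approximating
    X and Y from below by step functions built from those level sets. *)

Section layer_cake.
Local Open Scope ereal_scope.
Context {d} {T : measurableType d} {R : realType} (P : probability T R).
Let mu : {measure set _ -> \bar R} := @lebesgue_measure R.

Lemma ge0_expectation_layer_cake (X : T -> R) :
  measurable_fun setT X -> (forall w, 0 <= X w)%R ->
  'E_P[X] = \int[mu]_(r in `[0%R, +oo[) P (X @^-1` `[r, +oo[).
Proof.
move=> mX X_ge0; have mfX : X \in mfun by rewrite inE.
pose Y : {RV P >-> R} := mfun_Sub mfX.
have mPeq : measurable_fun setT (fun r : R => P (Y @^-1` [set r])).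
  apply: (eq_measurable_fun (EFin \o pmf Y)) => [r _|].
    by rewrite /= fineK// fin_num_measure.
  by apply/measurable_EFinP; exact: pmf_measurable.
have mPgt : measurable_fun setT (fun r : R => P (Y @^-1` `]r, +oo[)).
  exact: ccdf_measurable.
rewrite [LHS](_ : _ = 'E_P[Y])// [RHS](_ : _ = \int[mu]_(r in `[0%R, +oo[)
  P (Y @^-1` `[r, +oo[))// ge0_expectation_ccdf//.
transitivity (\int[mu]_(r in `[0%R, +oo[)
                (P (Y @^-1` [set r]) + P (Y @^-1` `]r, +oo[))).
  rewrite ge0_integralD//; [|exact: measurable_funTS..].
  rewrite [X in _ = X + _](_ : _ = 0) ?add0e; first exact: eq_integral.
  (* r |-> P (X = r) vanishes outside a countable set *)
  rewrite -(lebesgue_integral_pmf Y) integral_mkcond.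
  apply: eq_integral => /= r _; rewrite patchE.
  have [r_ge0 | r_lt0] := boolP (r \in `[0%R, +oo[).
    by rewrite ifT ?inE// fineK ?fin_num_measure.
  rewrite mem_setE (negbTE r_lt0) fineK ?fin_num_measure//.
  rewrite (_ : _ @^-1` _ = set0) ?measure0//.
  rewrite -nonemptyPn; apply: contraNnot r_lt0.
  by case=> w /= <-; rewrite in_itv/= andbT.
apply: eq_integral => /= r _.
rewrite -measureU//; try by rewrite -[_ @^-1` _]setTI; exact: mX.
- by rewrite -preimage_setU setU1itv.
- by rewrite -subset0 => w /= [->]; rewrite in_itv/= ltxx.
Qed.

End layer_cake.

Section bounded_expectation.
Context {d} {T : measurableType d} {R : realType} (P : probability T R).

Definition bounded_measurable (f : T -> R) :=
  measurable_fun setT f /\ exists M, forall w, `|f w| <= M.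

Definition Rexpectation (f : T -> R) : R := fine ('E_P[f])%E.

Lemma bounded_measurable_Lfun {f : T -> R} {r : R} : 1 <= r ->
  bounded_measurable f -> f \in Lfun P r%:E.
Proof.
move=> r_ge1 [mf [M fM]]; have r_gt0 : 0 < r by rewrite (lt_le_trans ltr01).
rewrite inE; apply/andP; split; rewrite inE//=.
rewrite /finite_norm unlock /Lnorm poweR_lty//.
rewrite (@le_lt_trans _ _ (\int[P]_w (M `^ r)%:E)%E) //; last first.
  by rewrite integral_cst// ltey_eq fin_numM// fin_num_measure.
under eq_integral => w _ do rewrite /comp abse_EFin poweR_EFin.
apply: ge0_le_integral => //; try by move=> w _; rewrite lee_fin powR_ge0.
- apply/measurable_EFinP.
  apply: (@measurableT_comp _ _ _ _ _ _ (@powR R ^~ r)) => //.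
  exact: measurableT_comp.
- move=> w _; rewrite lee_fin ge0_ler_powR// ?nnegrE//.
    exact: ltW.
  exact: le_trans (fM w).
Qed.

Lemma bounded_measurable_cst c : bounded_measurable (fun=> c).
Proof. by split => //; exists `|c|. Qed.

Lemma bounded_measurableD {f g} : bounded_measurable f -> bounded_measurable g ->
  bounded_measurable (fun w => f w + g w).
Proof.
case=> mf [M fM] [mg [N gN]]; split; first exact: measurable_funD.
by exists (M + N) => w; rewrite (le_trans (ler_normD _ _))// lerD.
Qed.

Lemma bounded_measurableM {f g} : bounded_measurable f -> bounded_measurable g ->
  bounded_measurable (fun w => f w * g w).
Proof.
case=> mf [M fM] [mg [N gN]]; split; first exact: measurable_funM.
by exists (M * N) => w; rewrite normrM ler_pM.
Qed.

Lemma bounded_measurable_indic (A : set T) : measurable A ->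
  bounded_measurable (\1_A : T -> R).
Proof.
move=> mA; split; first exact: measurable_indic.
by exists 1 => w; rewrite indicE; case: (w \in A); rewrite ?normr1 ?normr0.
Qed.

Lemma bounded_measurable_sum (F : nat -> T -> R) m :
  (forall l, bounded_measurable (F l)) ->
  bounded_measurable (fun w => \sum_(l < m) F l w).
Proof.
move=> bF; elim: m => [|m IH].
  under eq_fun do rewrite big_ord0; exact: bounded_measurable_cst.
under eq_fun do rewrite big_ord_recr /=; exact: bounded_measurableD.
Qed.

Lemma RexpectationE {f} : bounded_measurable f -> ('E_P[f] = (Rexpectation f)%:E)%E.
Proof. by move=> /(bounded_measurable_Lfun (lexx 1)) /expectation_fin_num /fineK. Qed.

Lemma RexpectationD f g : bounded_measurable f -> bounded_measurable g ->
  Rexpectation (fun w => f w + g w) = Rexpectation f + Rexpectation g.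
Proof.
move=> bf bg; rewrite /Rexpectation expectationD
  ?(bounded_measurable_Lfun (lexx 1))//.
by rewrite (RexpectationE bf) (RexpectationE bg).
Qed.

Lemma RexpectationZ k f : bounded_measurable f ->
  Rexpectation (fun w => k * f w) = k * Rexpectation f.
Proof.
move=> bf; rewrite /Rexpectation (_ : (fun w => _) = k \o* f); last first.
  by apply/funext => w /=; rewrite mulrC.
by rewrite expectationZl ?(bounded_measurable_Lfun (lexx 1))// RexpectationE.
Qed.

Lemma Rexpectation_cst c : Rexpectation (fun=> c) = c.
Proof. by rewrite /Rexpectation (_ : (fun=> c) = cst c)// expectation_cst. Qed.

Lemma Rexpectation_indic (A : set T) : measurable A ->
  Rexpectation (\1_A) = fine (P A).
Proof. by move=> mA; rewrite /Rexpectation expectation_indic. Qed.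

Lemma Rexpectation_ge0 f : (forall w, 0 <= f w) -> 0 <= Rexpectation f.
Proof. by move=> f_ge0; rewrite /Rexpectation fine_ge0// expectation_ge0. Qed.

Lemma Rexpectation_le f g : bounded_measurable f -> bounded_measurable g ->
  (forall w, f w <= g w) -> Rexpectation f <= Rexpectation g.
Proof.
move=> bf bg fg; have bNf : bounded_measurable (fun w => -1 * f w).
  exact: bounded_measurableM (bounded_measurable_cst _) bf.
rewrite -subr_ge0 -[_ - _]addrC -mulN1r -RexpectationZ// -RexpectationD//.
by apply: Rexpectation_ge0 => w; rewrite mulN1r addrC subr_ge0.
Qed.

Lemma Rexpectation_sum (F : nat -> T -> R) m :
  (forall l, bounded_measurable (F l)) ->
  Rexpectation (fun w => \sum_(l < m) F l w) = \sum_(l < m) Rexpectation (F l).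
Proof.
move=> bF; elim: m => [|m IH].
  by under eq_fun do rewrite big_ord0; rewrite big_ord0 Rexpectation_cst.
under eq_fun do rewrite big_ord_recr /=.
by rewrite RexpectationD ?big_ord_recr ?IH//; exact: bounded_measurable_sum.
Qed.

End bounded_expectation.

Section staircase.
Context {R : realDomainType}.

Definition staircase (h : R) (m : nat) (t : R) : R :=
  h * \sum_(l < m) (if l.+1%:R * h <= t then 1 else 0).

Variable h : R.
Hypothesis h_gt0 : 0 < h.

Lemma staircase_ge0 m (t : R) : 0 <= staircase h m t.
Proof.
by apply: mulr_ge0; [exact: ltW | apply: sumr_ge0 => l _; case: ifP].
Qed.

Lemma staircase_small m (t : R) : t < h -> staircase h m t = 0.
Proof.
move=> t_lt_h; rewrite /staircase big1 ?mulr0// => l _; rewrite ifF//.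
apply/negbTE; rewrite -ltNge (lt_le_trans t_lt_h)//.
by rewrite ler_pMl// ler1n.
Qed.

Lemma staircaseS m (t : R) : h <= t -> staircase h m.+1 t = h + staircase h m (t - h).
Proof.
move=> h_le_t; rewrite /staircase big_ord_recl /= mul1r ifT// mulrDr mulr1.
congr (_ + h * _); apply: eq_bigr => l _.
by rewrite /bump /= add1n -(natr1 l.+1) mulrDl mul1r lerBrDr.
Qed.

Lemma staircase_le m (t : R) : 0 <= t -> staircase h m t <= t.
Proof.
elim: m t => [|m IH] t t_ge0; first by rewrite /staircase big_ord0 mulr0.
have [t_lt_h|h_le_t] := ltP t h; first by rewrite staircase_small.
by rewrite staircaseS// -lerBrDl IH// subr_ge0.
Qed.

Lemma staircase_gt m (t : R) : 0 <= t <= m%:R * h -> t - h < staircase h m t.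
Proof.
elim: m t => [|m IH] t /andP[t_ge0 t_le].
  by rewrite /staircase big_ord0 mulr0 subr_lt0 (le_lt_trans t_le)// mul0r.
have [t_lt_h|h_le_t] := ltP t h; first by rewrite staircase_small// subr_lt0.
rewrite staircaseS// -ltrBlDl IH// subr_ge0 h_le_t lerBlDl.
by rewrite -natr1 mulrDl mul1r addrC in t_le.
Qed.

End staircase.

Section product_rule.
Context {d} {T : measurableType d} {R : realType} (P : probability T R).

Definition upper_sets_independent (X Y : T -> R) :=
  forall s t, P ([set w | s <= X w] `&` [set w | t <= Y w]) =
              (P [set w | (s <= X w)%R] * P [set w | (t <= Y w)%R])%E.

Lemma measurable_upper_set (X : T -> R) s : measurable_fun setT X ->
  measurable [set w | s <= X w].
Proof.
move=> mX; have := measurable_fun_le measurableT (measurable_cst s) mX.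
by rewrite setTI.
Qed.

Variables (h : R) (m : nat).

Lemma staircase_indicE (X : T -> R) w : staircase h m (X w) =
  h * \sum_(l < m) \1_[set w | l.+1%:R * h <= X w] w.
Proof.
congr (_ * _); apply: eq_bigr => l _; rewrite indicE.
by case: ifPn => lX; [rewrite mem_set | rewrite memNset//=; apply/negP].
Qed.

Lemma bounded_measurable_staircase {X : T -> R} : measurable_fun setT X ->
  bounded_measurable (fun w => staircase h m (X w)).
Proof.
move=> mX; under eq_fun do rewrite staircase_indicE.
apply: bounded_measurableM; first exact: bounded_measurable_cst.
apply: (bounded_measurable_sum (fun l => \1_[set w | l.+1%:R * h <= X w])).
by move=> l; apply: bounded_measurable_indic; exact: measurable_upper_set.
Qed.

Lemma Rexpectation_staircase (X : T -> R) : measurable_fun setT X ->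
  Rexpectation P (fun w => staircase h m (X w)) =
  h * \sum_(l < m) fine (P [set w | l.+1%:R * h <= X w]).
Proof.
move=> mX; pose A l := [set w | l.+1%:R * h <= X w].
have bA l : bounded_measurable (\1_(A l) : T -> R).
  exact/bounded_measurable_indic/measurable_upper_set.
under eq_fun do rewrite staircase_indicE.
rewrite RexpectationZ; last exact: (bounded_measurable_sum (fun l => \1_(A l))).
rewrite (Rexpectation_sum _ (fun l => \1_(A l)))//; congr (_ * _).
by apply: eq_bigr => l _; rewrite Rexpectation_indic//; exact: measurable_upper_set.
Qed.

Lemma Rexpectation_staircaseM (X Y : T -> R) :
  measurable_fun setT X -> measurable_fun setT Y -> upper_sets_independent X Y ->
  Rexpectation P (fun w => staircase h m (X w) * staircase h m (Y w)) =
  Rexpectation P (fun w => staircase h m (X w)) *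
  Rexpectation P (fun w => staircase h m (Y w)).
Proof.
move=> mX mY XY; set A := fun l => [set w | l.+1%:R * h <= X w].
set B := fun l => [set w | l.+1%:R * h <= Y w].
have mAB l l' : measurable (A l `&` B l').
  by apply: measurableI; exact: measurable_upper_set.
pose F l w : R := \sum_(l' < m) \1_(A l `&` B l') w.
have bF l : bounded_measurable (F l).
  apply: (bounded_measurable_sum (fun l' => \1_(A l `&` B l'))) => l'.
  exact: bounded_measurable_indic.
have -> : (fun w => staircase h m (X w) * staircase h m (Y w)) =
    (fun w => h * h * \sum_(l < m) F l w).
  apply/funext => w; rewrite !staircase_indicE mulrACA big_distrlr /=.
  by congr (_ * _); apply: eq_bigr => l _; apply: eq_bigr => l' _; rewrite indicI.
rewrite RexpectationZ; last exact: bounded_measurable_sum.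
rewrite Rexpectation_sum//.
rewrite !Rexpectation_staircase// mulrACA mulr_suml; congr (_ * _).
apply: eq_bigr => l _; rewrite mulr_sumr.
rewrite (Rexpectation_sum P (fun l' => \1_(A l `&` B l'))); last first.
  by move=> l'; exact: bounded_measurable_indic.
apply: eq_bigr => l' _; rewrite Rexpectation_indic// XY fineM//;
  exact/fin_num_measure/measurable_upper_set.
Qed.

End product_rule.

Section independent_product.
Context {d} {T : measurableType d} {R : realType} (P : probability T R).
Context {X Y : T -> R} {M : R}.
Hypotheses (M_gt0 : 0 < M) (mX : measurable_fun setT X) (mY : measurable_fun setT Y)
  (X_bnd : forall w, 0 <= X w <= M) (Y_bnd : forall w, 0 <= Y w <= M)
  (XY : upper_sets_independent P X Y).

Lemma bounded_measurable_between {Z : T -> R} : measurable_fun setT Z ->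
  (forall w, 0 <= Z w <= M) -> bounded_measurable Z.
Proof.
move=> mZ Z_bnd; split=> //; exists M => w.
by have /andP[Z_ge0 Z_le] := Z_bnd w; rewrite ger0_norm.
Qed.

Lemma Rexpectation_between {Z : T -> R} : measurable_fun setT Z ->
  (forall w, 0 <= Z w <= M) -> 0 <= Rexpectation P Z <= M.
Proof.
move=> mZ Z_bnd; rewrite Rexpectation_ge0 => [|w]; last by have /andP[] := Z_bnd w.
rewrite -[leRHS](Rexpectation_cst P) Rexpectation_le//.
- exact: bounded_measurable_between.
- exact: bounded_measurable_cst.
by move=> w; have /andP[] := Z_bnd w.
Qed.

Section approximation.
Variable m : nat.
Hypothesis m_gt0 : (0 < m)%N.
Let h := M / m%:R.
Let h_gt0 : 0 < h. Proof. by rewrite divr_gt0// ltr0n. Qed.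
Let D (Z : T -> R) w := staircase h m (Z w).

Let D_bnd {Z : T -> R} {w} : 0 <= Z w <= M -> 0 <= D Z w <= Z w /\ Z w - h < D Z w.
Proof.
move=> /andP[Z_ge0 Z_le]; split; first by rewrite staircase_ge0// staircase_le.
by apply: staircase_gt; rewrite // Z_ge0 /h mulrC divfK// pnatr_eq0 -lt0n.
Qed.

Lemma Rexpectation_staircase_bounds {Z : T -> R} : measurable_fun setT Z ->
  (forall w, 0 <= Z w <= M) ->
  Rexpectation P (D Z) <= Rexpectation P Z <= Rexpectation P (D Z) + h.
Proof.
move=> mZ Z_bnd; have bZ := bounded_measurable_between mZ Z_bnd.
have bDZ : bounded_measurable (D Z) := bounded_measurable_staircase h m mZ.
apply/andP; split.
  by apply: Rexpectation_le => // w; have [/andP[]] := D_bnd (Z_bnd w).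
rewrite -[X in _ + X](Rexpectation_cst P) -RexpectationD//; last first.
  exact: bounded_measurable_cst.
apply: Rexpectation_le => //; first exact: bounded_measurableD (bounded_measurable_cst _).
by move=> w; have [_] := D_bnd (Z_bnd w); lra.
Qed.

Lemma Rexpectation_staircaseM_bounds :
  Rexpectation P (D X) * Rexpectation P (D Y) <= Rexpectation P (fun w => X w * Y w)
    <= Rexpectation P (D X) * Rexpectation P (D Y) + 2 * M * h.
Proof.
have bXY := bounded_measurableM (bounded_measurable_between mX X_bnd)
  (bounded_measurable_between mY Y_bnd).
have bDXY : bounded_measurable (fun w => D X w * D Y w).
  exact: bounded_measurableM (bounded_measurable_staircase h m mX)
    (bounded_measurable_staircase h m mY).
rewrite -Rexpectation_staircaseM// -[X in _ <= _ + X](Rexpectation_cst P) -RexpectationD//;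
  last exact: bounded_measurable_cst.
apply/andP; split; apply: Rexpectation_le => //.
- move=> w; have [/andP[? ?] _] := D_bnd (X_bnd w).
  by have [/andP[? ?] _] := D_bnd (Y_bnd w); exact: ler_pM.
- exact: bounded_measurableD bDXY (bounded_measurable_cst _).
move=> w; have [/andP[? ?] ?] := D_bnd (X_bnd w); have [/andP[? ?] ?] := D_bnd (Y_bnd w).
(* XY - DX DY = X (Y - DY) + DY (X - DX) *)
have /andP[? ?] := X_bnd w; have /andP[? ?] := Y_bnd w; rewrite -/(D X w) -/(D Y w); nra.
Qed.

Lemma Rexpectation_indep_approx :
  `|Rexpectation P (fun w => X w * Y w) - Rexpectation P X * Rexpectation P Y|
    <= 2 * M * h.
Proof.
have /andP[EX_lb EX_ub] := Rexpectation_staircase_bounds mX X_bnd.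
have /andP[EY_lb EY_ub] := Rexpectation_staircase_bounds mY Y_bnd.
have /andP[EX_ge0 EX_le] := Rexpectation_between mX X_bnd.
have /andP[EY_ge0 EY_le] := Rexpectation_between mY Y_bnd.
have EDX_ge0 : 0 <= Rexpectation P (D X).
  by apply: Rexpectation_ge0 => w; exact: staircase_ge0.
have EDY_ge0 : 0 <= Rexpectation P (D Y).
  by apply: Rexpectation_ge0 => w; exact: staircase_ge0.
have /andP[EXY_lb EXY_ub] := Rexpectation_staircaseM_bounds.
rewrite ler_norml; apply/andP; split; nra.
Qed.

End approximation.

Lemma RexpectationM_indep :
  Rexpectation P (fun w => X w * Y w) = Rexpectation P X * Rexpectation P Y.
Proof.
apply/eqP; rewrite -subr_eq0 -normr_le0; apply/ler_addgt0Pr => e e_gt0.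
have M2_gt0 : 0 < 2 * M * M by rewrite !mulr_gt0.
have [k] := ltr_add_invr (divr_gt0 e_gt0 M2_gt0).
rewrite add0r ltr_pdivlMr// => k_lt; rewrite add0r.
apply: le_trans (Rexpectation_indep_approx k.+1 isT) _.
by rewrite ltW// (_ : _ * (M / _) = k.+1%:R^-1 * (2 * M * M)) //; ring.
Qed.

End independent_product.

Section uncorrelated_sum.
Local Open Scope ereal_scope.
Context {d} {T : measurableType d} {R : realType} (P : probability T R).
Variable Z : nat -> T -> R.
Hypotheses (Z_L2 : forall i, Z i \in Lfun P 2%:E)
  (Z_uncorrelated : forall i j, i != j -> covariance P (Z i) (Z j) = 0).

Local Notation S k := (fun w => \sum_(i < k) Z i w)%R.

Let sumS k : S k.+1 = (S k \+ Z k)%R.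
Proof. by apply/funext => w; rewrite big_ord_recr. Qed.

Let sum0 : S 0 = cst 0%R.
Proof. by apply/funext => w; rewrite big_ord0. Qed.

Lemma Lfun2_sum k : S k \in Lfun P 2%:E.
Proof.
elim: k => [|k IH]; first by rewrite sum0 Lfun_cst.
rewrite sumS; apply: (Lfun_addr_closed P (_ : 1 <= 2%:E)).2 => //; exact: lee1n.
Qed.

Lemma covariance_sum_uncorrelated k j : (k <= j)%N -> covariance P (S k) (Z j) = 0.
Proof.
elim: k => [|k IH] kj; first by rewrite sum0 covariance_cst_l.
rewrite sumS covarianceDl ?Lfun2_sum// IH ?(ltnW kj)// Z_uncorrelated ?adde0//.
by rewrite neq_ltn kj.
Qed.

Lemma variance_sum_uncorrelated k : 'V_P[S k] = \sum_(i < k) 'V_P[Z i].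
Proof.
elim: k => [|k IH]; first by rewrite sum0 variance_cst big_ord0.
rewrite sumS varianceD ?Lfun2_sum// IH covariance_sum_uncorrelated// mule0 adde0.
by rewrite big_ord_recr.
Qed.

End uncorrelated_sum.

Section truncation.
Context {R : realType}.

Definition trunc (u r : R) : R := r * \1_[set r' | r' < u] r.

Lemma measurable_trunc u : measurable_fun setT (trunc u).
Proof.
apply: measurable_funM => //; apply: measurable_indic.
rewrite (_ : [set r' | r' < u] = `]-oo, u[%classic); first exact: measurable_itv.
by apply/seteqP; split => r; rewrite /= in_itv.
Qed.

Lemma trunc_ge0 u r : 0 <= r -> 0 <= trunc u r.
Proof. by move=> r_ge0; rewrite mulr_ge0. Qed.

Lemma trunc_le u r : 0 <= r -> trunc u r <= r.
Proof. by move=> r_ge0; rewrite /trunc indicE; case: (r \in _); rewrite ?mulr1 ?mulr0. Qed.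

Lemma trunc_le_bound u r : 0 <= u -> trunc u r <= u.
Proof.
move=> u_ge0; rewrite /trunc indicE.
have [r_lt_u|u_le_r] := ltP r u; first by rewrite mem_set// mulr1 ltW.
by rewrite memNset ?mulr0//; apply/negP; rewrite -leNgt.
Qed.

End truncation.

Section tail.
Context {d} {T : measurableType d} {R : realType} (P : probability T R).
Context {X : T -> R}.
Hypothesis mX : measurable_fun setT X.

Lemma tailF_ge0 r : 0 <= tailF P X r.
Proof. by rewrite fine_ge0. Qed.

Lemma tailF_le1 r : tailF P X r <= 1.
Proof.
rewrite -lee_fin fineK ?fin_num_measure ?probability_le1//;
  exact: measurable_upper_set.
Qed.

Lemma tailF_nonincreasing : {homo tailF P X : s t /~ t <= s}.
Proof.
move=> s t st; rewrite /tailF fine_le ?fin_num_measure ?le_measure ?inE//;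
  try exact: measurable_upper_set.
by move=> w /= tw; rewrite (le_trans st).
Qed.

Lemma measurable_tailF : measurable_fun setT (tailF P X).
Proof. exact: nonincreasing_measurable tailF_nonincreasing. Qed.

End tail.

Section truncated_mean.
Context {d} {T : measurableType d} {R : realType} (P : probability T R).
Context {X : T -> R}.
Hypotheses (mX : measurable_fun setT X) (X_ge0 : forall w, 0 <= X w).
Let F := tailF P X.

Lemma tailF_trunc_ge (u r : R) : F r - F u <= tailF P (trunc u \o X) r.
Proof.
have mY : measurable_fun setT (trunc u \o X) := measurableT_comp (measurable_trunc u) mX.
(* {r <= X} is covered by {r <= trunc u X} and {u <= X} *)
rewrite lerBlDr /F /tailF -lee_fin EFinD !fineK ?fin_num_measure//;
  try exact: measurable_upper_set.
apply: le_trans (measureU2 _ _ _); try exact: measurable_upper_set.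
rewrite le_measure ?inE//; try exact: measurable_upper_set.
  by apply: measurableU; exact: measurable_upper_set.
move=> w /= rw; have [Xu|Xu] := ltP (X w) u; [left|right] => //.
by rewrite /trunc indicE mem_set ?mulr1.
Qed.

Lemma integrable_bounded_itv {f : R -> R} {u : R} : 0 < u ->
  measurable_fun setT f -> (forall r, `|f r| <= 1) ->
  lebesgue_measure.-integrable `[0, u] (EFin \o f).
Proof.
move=> u_gt0 mf f_le1; apply: measurable_bounded_integrable => //.
- have := lebesgue_measure_itv `[0, u]%R; rewrite /= lte_fin u_gt0 => ->; exact: ltry.
- exact: measurable_funTS.
- exists 1; split; first exact: num_real.
  by move=> M M_gt1 r _ /=; rewrite (le_trans (f_le1 r))// ltW.
Qed.

Lemma intTail_subE {u : R} : 0 < u -> (intTail P X u - u * F u)%:E =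
  (\int[lebesgue_measure]_(r in `[0%R, u]) (F r - F u)%:E)%E.
Proof.
move=> u_gt0; have F_le1 r : `|F r| <= 1.
  by rewrite ger0_norm ?tailF_ge0 ?(tailF_le1 P mX).
have iF := integrable_bounded_itv u_gt0 (measurable_tailF P mX) F_le1.
have iFu := integrable_bounded_itv u_gt0 (measurable_cst (F u)) (fun=> F_le1 u).
rewrite integralB_EFin// EFinB /intTail /Rintegral fineK ?integrable_fin_num//.
rewrite integral_cst//; have := lebesgue_measure_itv `[0, u]%R.
by rewrite /= lte_fin u_gt0 => ->; rewrite -EFinB subr0 -EFinM mulrC.
Qed.

Lemma Rexpectation_trunc_ge {u : R} : 0 < u ->
  intTail P X u - u * F u <= Rexpectation P (trunc u \o X).
Proof.
move=> u_gt0; set Y := trunc u \o X.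
have mY : measurable_fun setT Y := measurableT_comp (measurable_trunc u) mX.
have eY (r : R) : P (Y @^-1` `[r, +oo[%classic) = (tailF P Y r)%:E.
  rewrite /tailF fineK ?fin_num_measure//; last exact: measurable_upper_set.
  by congr (P _); apply/funext => w /=; rewrite in_itv/= andbT.
have mPY : measurable_fun setT (fun r : R => P (Y @^-1` `[r, +oo[%classic)).
  apply: (eq_measurable_fun (EFin \o tailF P Y)) => [s _|]; first by rewrite eY.
  by apply/measurable_EFinP; exact: (measurable_tailF P mY).
rewrite -lee_fin /Rexpectation fineK; last first.
  apply/expectation_fin_num/(bounded_measurable_Lfun P (lexx 1)); split=> //.
  by exists u => w; rewrite ger0_norm ?trunc_ge0// trunc_le_bound// ltW.
rewrite ge0_expectation_layer_cake// => [|w]; last exact/trunc_ge0/X_ge0.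
rewrite intTail_subE//; apply: (@le_trans _ _
  (\int[lebesgue_measure]_(r in `[0%R, u]) P (Y @^-1` `[r, +oo[%classic))%E).
- apply: ge0_le_integral => //.
  + move=> r; rewrite /= in_itv/= => /andP[r_ge0 r_le_u].
    by rewrite lee_fin subr_ge0 (tailF_nonincreasing P mX).
  + apply/measurable_EFinP; apply: measurable_funB => //.
    exact: measurable_funTS (measurable_tailF P mX).
  + exact: measurable_funTS.
  by move=> r _; rewrite eY lee_fin tailF_trunc_ge.
- apply: ge0_subset_integral => //; first exact: measurable_funTS.
  by move=> r; rewrite /= !in_itv /= => /andP[-> _].
Qed.

End truncated_mean.

Section lower_deviation.
Context {d} {T : measurableType d} {R : realType} (P : probability T R).

Lemma lower_deviation_chebyshev (S H : T -> R) (c t : R) : 0 < t ->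
  measurable_fun setT S -> measurable_fun setT H -> (forall w, H w <= S w) ->
  c - t / 2 <= fine 'E_P[H] ->
  (P [set w | (S w - c <= - t)%R] <= ((t / 2) ^- 2)%:E * 'V_P[H])%E.
Proof.
move=> t_gt0 mS mH HS c_le; have mfH : H \in mfun by rewrite inE.
pose HRV : {RV P >-> R} := mfun_Sub mfH.
apply: le_trans (chebyshev HRV (_ : 0 < t / 2)) => //; last by lra.
apply: le_measure; rewrite ?inE.
- have := measurable_fun_le measurableT (measurable_funB mS (measurable_cst c))
    (measurable_cst (- t)).
  by rewrite setTI.
- apply: measurable_upper_set; apply: measurableT_comp => //.
  exact: measurable_funB.
move=> w /= Sw; have HSw := HS w; rewrite ler_normr; apply/orP; right.
change (t / 2 <= - (H w - fine 'E_P[H])); lra.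
Qed.

End lower_deviation.

Section iid.
Context {d} {T : measurableType d} {R : realType} (P : probability T R).
Context {xi : nat -> T -> R}.
Hypotheses (mxi : forall i, measurable_fun setT (xi i))
  (xi_indep : mutually_independent P xi) (xi_ident : identically_distributed P xi)
  (xi_ge0 : forall i w, 0 <= xi i w).

Lemma expectation_ident_comp (f : R -> R) i : measurable_fun setT f ->
  (forall r, 0 <= r -> 0 <= f r) -> ('E_P[f \o xi i] = 'E_P[f \o xi 0%N])%E.
Proof.
move=> mf f_ge0; rewrite !ge0_expectation_layer_cake;
  do ?[exact: measurableT_comp | by move=> w; exact/f_ge0/xi_ge0].
apply: eq_integral => r _; apply: (xi_ident i (f @^-1` `[r, +oo[%classic)).
by rewrite -[_ @^-1` _]setTI; apply: mf => //; exact: measurable_itv.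
Qed.

Lemma upper_sets_independent_comp (f g : R -> R) i j : i != j ->
  measurable_fun setT f -> measurable_fun setT g ->
  upper_sets_independent P (f \o xi i) (g \o xi j).
Proof.
move=> ij mf mg s t.
pose B k := if k == i then [set r | s <= f r] else [set r | t <= g r].
have mB k : measurable (B k).
  by rewrite /B; case: ifP => _; exact: measurable_upper_set.
have := xi_indep [:: i; j] B; rewrite /= inE ij => /(_ isT (fun k _ => mB k)).
by rewrite !big_cons !big_nil /B eqxx setIT mule1 ifN// eq_sym.
Qed.

Context {u : R}.
Hypothesis u_gt0 : 0 < u.
Local Notation eta i := (trunc u \o xi i).

Let eta_bnd i w : 0 <= eta i w <= u.
Proof. by apply/andP; split; [exact/trunc_ge0/xi_ge0 | exact/trunc_le_bound/ltW]. Qed.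

Let meta i : measurable_fun setT (eta i).
Proof. exact: measurableT_comp (measurable_trunc u) (mxi i). Qed.

Let bounded_eta i : bounded_measurable (eta i).
Proof. exact: bounded_measurable_between (meta i) (eta_bnd i). Qed.

Lemma Rexpectation_trunc_ident i : Rexpectation P (eta i) = Rexpectation P (eta 0%N).
Proof.
rewrite /Rexpectation expectation_ident_comp//; first exact: measurable_trunc.
exact: trunc_ge0.
Qed.

Lemma variance_trunc_ident i : 'V_P[eta i] = 'V_P[eta 0%N].
Proof.
rewrite /variance unlock.
rewrite -/(Rexpectation P (eta i)) -/(Rexpectation P (eta 0%N)) Rexpectation_trunc_ident.
set m := Rexpectation P (eta 0%N); pose f r := (trunc u r - m) * (trunc u r - m).
rewrite (_ : ((eta i \- cst m) * (eta i \- cst m))%R = f \o xi i)//.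
rewrite (_ : ((eta 0%N \- cst m) * (eta 0%N \- cst m))%R = f \o xi 0%N)//.
rewrite expectation_ident_comp// => [|r _]; last by rewrite /f -expr2 sqr_ge0.
by apply: measurable_funM; apply: measurable_funB => //; exact: measurable_trunc.
Qed.

Lemma covariance_trunc_indep i j : i != j -> covariance P (eta i) (eta j) = 0%E.
Proof.
move=> ij; have bij := bounded_measurableM (bounded_eta i) (bounded_eta j).
rewrite covarianceE; try exact: (bounded_measurable_Lfun P (lexx 1)).
rewrite (RexpectationE _ bij) !(RexpectationE _ (bounded_eta _)).
rewrite (RexpectationM_indep P u_gt0 (meta i) (meta j) (eta_bnd i) (eta_bnd j)).
  by rewrite -EFinM subee.
exact: upper_sets_independent_comp (measurable_trunc u) (measurable_trunc u).
Qed.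

Lemma variance_sum_trunc k :
  'V_P[fun w => \sum_(i < k) eta i w] = (k%:R * fine 'V_P[eta 0%N])%:E.
Proof.
have L2 i : eta i \in Lfun P 2%:E.
  by apply: (bounded_measurable_Lfun P _ (bounded_eta i)); rewrite ler1n.
rewrite (variance_sum_uncorrelated P (fun i => eta i) L2 covariance_trunc_indep).
have V0 : 'V_P[eta 0%N] = (fine 'V_P[eta 0%N])%:E.
  by rewrite fineK// variance_fin_num.
under eq_bigr do rewrite variance_trunc_ident V0.
by rewrite sumEFin sumr_const card_ord mulr_natl.
Qed.

Lemma sum_lower_deviation k (g t V : R) : 0 < t -> ('V_P[eta 0%N] <= V%:E)%E ->
  k%:R * g - t / 2 <= k%:R * Rexpectation P (eta 0%N) ->
  (P [set w | (\sum_(i < k) xi i w - k%:R * g <= - t)%R]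
    <= (4 * k%:R * V / t ^+ 2)%:E)%E.
Proof.
move=> t_gt0 var_le mean_ge; pose H w := \sum_(i < k) eta i w.
have bH : bounded_measurable H := bounded_measurable_sum (fun i => eta i) k bounded_eta.
have EH : fine 'E_P[H] = k%:R * Rexpectation P (eta 0%N).
  rewrite -/(Rexpectation P H) (Rexpectation_sum P (fun i => eta i))//.
  under eq_bigr do rewrite Rexpectation_trunc_ident.
  by rewrite sumr_const card_ord mulr_natl.
apply: le_trans (lower_deviation_chebyshev P _ H (k%:R * g) _ t_gt0 _ bH.1 _ _) _.
- by apply: measurable_sum => i; exact: mxi.
- by move=> w; apply: ler_sum => i _; exact/trunc_le/xi_ge0.
- by rewrite EH.
rewrite variance_sum_trunc -EFinM lee_fin.
have var_ge0 : 0 <= fine 'V_P[eta 0%N] by rewrite fine_ge0// variance_ge0.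
have var_leV : fine 'V_P[eta 0%N] <= V.
  rewrite -lee_fin fineK// variance_fin_num//.
  by apply: (bounded_measurable_Lfun P _ (bounded_eta 0%N)); rewrite ler1n.
rewrite (_ : (t / 2) ^- 2 = 4 / t ^+ 2); last by field; lra.
rewrite [X in _ <= X](_ : _ = 4 / t ^+ 2 * (k%:R * V)); last by ring.
apply: ler_wpM2l; first by rewrite divr_ge0 ?exprn_ge0 ?ltW.
exact: ler_wpM2l.
Qed.

End iid.

Lemma limn_einf_gt0_near {R : realType} {v : R ^nat} :
  (0 < limn_einf (fun n => (v n)%:E))%E ->
  exists2 c : R, 0 < c & \forall n \near \oo, c < v n.
Proof.
set V := fun n => (v n)%:E.
rewrite limn_einf_lim (cvg_lim (@ereal_hausdorff R) (@cvg_einfs_sup R V)) => sup_gt0.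
have [_ [n _ <-] inf_gt0] := ereal_sup_gt sup_gt0.
have [c c_gt0 c_lt] : exists2 c : R, 0 < c & (c%:E < einfs V n)%E.
  move: inf_gt0; case: (einfs V n) => [r| |] //=.
  - by rewrite lte_fin => r_gt0; exists (r / 2); [lra | rewrite lte_fin; lra].
  - by move=> _; exists 1 => //; rewrite ltry.
exists c => //; exists n => // k /= nk.
by rewrite -lte_fin (lt_le_trans c_lt)//; apply: ereal_inf_lbound; exists k.
Qed.

Section asymptotics.
Context {R : realType}.
Implicit Types x y g gu f fu : R ^nat.

Lemma near_scaled_gap_le {x g gu} {c e : R} : 0 < c -> 0 < e ->
  (\forall n \near \oo, 0 < x n) -> (\forall n \near \oo, c < x n / (n%:R * g n)) ->
  seq_equiv gu g -> \forall n \near \oo, n%:R * (g n - gu n) <= e * x n.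
Proof.
move=> c_gt0 e_gt0 x_gt0 c_lt gu_g.
have ec_gt0 : 0 < e * c by rewrite mulr_gt0.
have gu_near := cvgr_dist_lt _ _ gu_g _ ec_gt0.
near=> n; have xn_gt0 : 0 < x n by near: n.
have cn : c < x n / (n%:R * g n) by near: n.
have ng_gt0 : 0 < n%:R * g n.
  rewrite ltNge; apply/negP => ng_le0.
  have : x n / (n%:R * g n) <= 0 by apply: mulr_ge0_le0; [exact: ltW | rewrite invr_le0].
  lra.
have ng_lt : c * (n%:R * g n) < x n by rewrite -ltr_pdivlMr.
have : `|1 - gu n / g n| < e * c by near: n; exact: gu_near.
have g_gt0 : 0 < g n by have : 0 <= n%:R :> R by []; nra.
rewrite ltr_norml => /andP[_ r_lt].
have -> : g n - gu n = g n * (1 - gu n / g n) by field; rewrite gt_eqF.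
set r := 1 - gu n / g n in r_lt *.
have : n%:R * g n * r <= n%:R * g n * (e * c) by rewrite ler_pM2l// ltW.
have : e * (c * (n%:R * g n)) < e * x n by rewrite ltr_pM2l.
nra.
Unshelve. all: by end_near.
Qed.

Lemma near_scaled_tail_le {x y f fu} {e : R} : 0 < e ->
  (\forall n \near \oo, 0 <= x n) -> (forall n, 0 <= f n) -> y @ \oo --> +oo ->
  seq_equiv fu (fun n => y n * f n) ->
  (fun n => n%:R * y n ^+ 2 * f n) @ \oo --> (0 : R) ->
  \forall n \near \oo, n%:R * (x n / y n * fu n) <= e * x n.
Proof.
move=> e_gt0 x_ge0 f_ge0 y_oo fu_yf nyf.
have half_gt0 : 0 < 1 / 2 :> R by lra.
have e2_gt0 : 0 < e / 2 by lra.
have fu_near := cvgr_dist_lt _ _ fu_yf _ half_gt0.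
have nyf_near := cvgr_dist_lt _ _ nyf _ e2_gt0.
near=> n; have xn_ge0 : 0 <= x n by near: n.
have yn_ge1 : 1 <= y n by near: n; exact: (cvgryPge y).1 y_oo 1.
have : `|1 - fu n / (y n * f n)| < 1 / 2 by near: n; exact: fu_near.
have : `|0 - n%:R * y n ^+ 2 * f n| < e / 2 by near: n; exact: nyf_near.
rewrite sub0r normrN => /(le_lt_trans (ler_norm _)) nyf_lt.
rewrite ltr_norml => /andP[q_gt q_lt].
have yf_gt0 : 0 < y n * f n.
  rewrite lt_def mulr_ge0 ?f_ge0 ?andbT ?(le_trans ler01)//; apply/eqP => yf0.
  by move: q_lt; rewrite yf0 invr0 mulr0; lra.
set q := fu n / (y n * f n) in q_gt q_lt.
have -> : n%:R * (x n / y n * fu n) = q * (n%:R * f n) * x n.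
  have yn_neq0 : y n != 0 by rewrite gt_eqF// (lt_le_trans ltr01).
  have fn_neq0 : f n != 0 by apply: contraTneq yf_gt0 => ->; rewrite mulr0 ltxx.
  by rewrite /q; field; rewrite fn_neq0 yn_neq0.
have nf_ge0 : 0 <= n%:R * f n by rewrite mulr_ge0.
have nf_le : n%:R * f n <= e / 2.
  have y2_ge1 : 1 <= y n ^+ 2 by rewrite expr_ge1// (le_trans ler01).
  by apply: ltW; apply: le_lt_trans nyf_lt; rewrite -mulrA mulrCA ler_peMl.
have qnf_le : q * (n%:R * f n) <= e by nra.
by rewrite ler_wpM2r.
Unshelve. all: by end_near.
Qed.

Lemma near_centring_error_le {x y a g gu f fu} {c L : R} : 0 < c -> 0 < L ->
  (\forall n \near \oo, 0 < x n) -> (\forall n \near \oo, c < x n / (n%:R * g n)) ->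
  seq_equiv gu g -> (forall n, 0 <= f n) -> y @ \oo --> +oo ->
  seq_equiv fu (fun n => y n * f n) ->
  (fun n => n%:R * y n ^+ 2 * f n) @ \oo --> (0 : R) -> a @ \oo --> L ->
  \forall n \near \oo, n%:R * (g n - gu n + x n / y n * fu n) <= a n * x n / 2.
Proof.
move=> c_gt0 L_gt0 x_gt0 c_lt gu_g f_ge0 y_oo fu_yf nyf aL.
have L8_gt0 : 0 < L / 8 by lra.
have L2_gt0 : 0 < L / 2 by lra.
have x_ge0 : \forall n \near \oo, 0 <= x n by apply: filterS x_gt0 => n /ltW.
have g_gap := near_scaled_gap_le c_gt0 L8_gt0 x_gt0 c_lt gu_g.
have f_gap := near_scaled_tail_le L8_gt0 x_ge0 f_ge0 y_oo fu_yf nyf.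
have a_near := cvgr_dist_lt _ _ aL _ L2_gt0.
near=> n; have xn_gt0 : 0 < x n by near: n.
have : `|L - a n| < L / 2 by near: n; exact: a_near.
rewrite ltr_norml => /andP[_ an_gt].
have : n%:R * (g n - gu n) <= L / 8 * x n by near: n; exact: g_gap.
have : n%:R * (x n / y n * fu n) <= L / 8 * x n by near: n; exact: f_gap.
rewrite mulrDr; nra.
Unshelve. all: by end_near.
Qed.

End asymptotics.

Lemma ler_natM_bound {R : realDomainType} {k n : nat} {D B : R} : (k <= n)%N ->
  0 <= B -> n%:R * D <= B -> k%:R * D <= B.
Proof.
move=> kn B_ge0 nD; have [D_ge0|D_lt0] := leP 0 D.
  by apply: le_trans nD; rewrite ler_wpM2r// ler_nat.
by apply: le_trans B_ge0; rewrite mulr_ge0_le0// ltW.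
Qed.

Theorem corollary2 (d : measure_display) (T : measurableType d) (R : realType)
  (P : probability T R) (xi : nat -> T -> R)
  (x a y : R ^nat) (C : R) :
  (forall i, measurable_fun setT (xi i)) ->
  mutually_independent P xi ->
  identically_distributed P xi ->
  (forall i w, 0 <= xi i w) ->
  (exists l : R -> R, slowly_varying l /\
     \forall t \near +oo, tailF P (xi 0%N) t = t^-1 * l t) ->
  (forall n, (0 < n)%N -> 0 < x n) ->
  (0 < limn_einf (fun n => (x n / (n%:R * intTail P (xi 0%N) (x n)))%:E))%E ->
  (forall n, (0 < n)%N -> 0 < a n) ->
  (exists2 L : R, 0 < L & a @ \oo --> L) ->
  (forall n, (0 < n)%N -> 0 < y n) ->
  y @ \oo --> +oo ->
  y =o_\oo x ->
  (fun n => n%:R * y n ^+ 2 * tailF P (xi 0%N) (x n)) @ \oo --> (0 : R) ->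
  seq_equiv (fun n => tailF P (xi 0%N) (x n / y n))
            (fun n => y n * tailF P (xi 0%N) (x n)) ->
  seq_equiv (fun n => intTail P (xi 0%N) (x n / y n))
            (fun n => intTail P (xi 0%N) (x n)) ->
  0 < C ->
  (forall n, (0 < n)%N ->
     ('V_P[(fun w => xi 0%N w * \1_[set w' | xi 0%N w' < x n / y n] w)%R]
       <= (C * (x n ^+ 2 * tailF P (xi 0%N) (x n)) / y n)%:E)%E) ->
  \forall n \near \oo, forall k : nat, (1 <= k <= n)%N ->
    (P [set w | (\sum_(i < k) xi i w - k%:R * intTail P (xi 0%N) (x n)
                  <= - (a n * x n))%R]
     <= (4 * C * k%:R * tailF P (xi 0%N) (x n) / (a n ^+ 2 * y n))%:E)%E.
Proof.
move=> mxi xi_indep xi_ident xi_ge0 _ x_gt0 liminf_gt0 a_gt0 [L L_gt0 aL] y_gt0 y_oo _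
  nyF_0 F_equiv G_equiv _ var_le.
set F := tailF P (xi 0%N); set G := intTail P (xi 0%N).
have [c c_gt0 c_lt] := limn_einf_gt0_near liminf_gt0.
have x_gt0_near : \forall n \near \oo, 0 < x n.
  by near=> n; apply: x_gt0; near: n; exact: nbhs_infty_gt.
have err := near_centring_error_le c_gt0 L_gt0 x_gt0_near c_lt G_equiv
  (fun=> tailF_ge0 _ _) y_oo F_equiv nyF_0 aL.
near=> n => k /andP[k_ge1 kn].
have n_gt0 : (0 < n)%N by near: n; exact: nbhs_infty_gt.
have [[xn_gt0 yn_gt0] an_gt0] := (x_gt0 n n_gt0, y_gt0 n n_gt0, a_gt0 n n_gt0).
have u_gt0 : 0 < x n / y n by rewrite divr_gt0.
have t_gt0 : 0 < a n * x n by rewrite mulr_gt0.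
have var_trunc : ('V_P[trunc (x n / y n) \o xi 0%N]
    <= (C * (x n ^+ 2 * F (x n)) / y n)%:E)%E by exact: var_le.
apply: le_trans (sum_lower_deviation P mxi xi_indep xi_ident xi_ge0 u_gt0 k
  (G (x n)) _ _ t_gt0 var_trunc _) _.
  have mean_ge := Rexpectation_trunc_ge P (mxi 0%N) (xi_ge0 0%N) u_gt0.
  have err_k : k%:R * (G (x n) - G (x n / y n) + x n / y n * F (x n / y n))
      <= a n * x n / 2.
    apply: (ler_natM_bound kn); first by rewrite divr_ge0 ?ltW.
    by near: n; exact: err.
  have := ler_wpM2l (ler0n _ k) mean_ge; rewrite -/F -/G; nra.
rewrite lee_fin le_eqVlt; apply/orP; left; apply/eqP.
by field; rewrite !gt_eqF.
Unshelve. all: by end_near.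
Qed.
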